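(* Let $(H,B_1,B_2)$ be a Rota-Baxter system of Hopf algebras with cocycle $\sigma$ and descendent Hopf algebra $H_{B_1,B_2}$ (with underlying space $H_1=\operatorname{Im}(\sigma)$), and let $A$ be a unital commutative algebra. Define $\Psi:\mathrm{Char}(H,A)\to\mathrm{Char}(H_{B_1,B_2},A)$ by $\Psi(f)(a)=f(a)$ for $a\in H_1$. Then $\Psi$ is a well-defined group homomorphism.
   Context: $\mathbb{F}$ is a field of characteristic $0$; Sweedler notation $\Delta(a)=a_1\otimes a_2$. A Rota-Baxter system of Hopf algebras is a triple $(H,B_1,B_2)$ with $(H,\cdot,1,\Delta,\epsilon,S)$ a cocommutative Hopf algebra, $B_1,B_2$ coalgebra homomorphisms with $B_1(1)=B_2(1)=1$, and for all $a,b\in H$: $B_1(a)B_1(b)=B_1(B_1(a_1)bS(B_2(a_2)))$, $B_2(a)B_2(b)=B_2(B_1(a_1)bS(B_2(a_2)))$. Descendent operation $a\circ b=B_1(a_1)bS(B_2(a_2))$, cocycle $\sigma(a)=B_1(a_1)S(B_2(a_2))$; $H_{B_1,B_2}$ is the Hopf algebra $H_1$ with product $\circ$, unit $1$, restricted $\Delta,\epsilon$, antipode $T(a)=S(B_1(a_1))B_2(a_2)$. Convolution: $(f\ast g)(a)=f(a_1)g(a_2)$. $\mathrm{Char}(H,A)$ is the group under $\ast$ of algebra homomorphisms $H\to A$; $\mathrm{Char}(H_{B_1,B_2},A)$ is the group under convolution (w.r.t. the coproduct of $H_1$) of algebra homomorphisms $(H_1,\circ,1)\to A$. *)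

(* Elements of H (x) H are represented by finite lists of
   pairs (sum of elementary tensors); two such lists are identified when they
   agree under every bilinear map into every F-vector space (universal
   property of the tensor product).  Same for H (x) H (x) H. *)
From HB Require Import structures.
From mathcomp Require Import all_boot all_order all_algebra.
Set Implicit Arguments. Unset Strict Implicit. Unset Printing Implicit Defensive.
Import Order.TTheory GRing.Theory Num.Theory.
Local Open Scope ring_scope.

Definition is_lin (F : fieldType) (U V : lmodType F) (f : U -> V) : Prop :=
  forall (k : F) (x y : U), f (k *: x + y) = k *: f x + f y.

Definition is_bilin (F : fieldType) (U W V : lmodType F) (b : U -> W -> V) : Prop :=
  (forall y, is_lin (fun x => b x y)) /\ (forall x, is_lin (b x)).

Definition is_trilin (F : fieldType) (U1 U2 U3 V : lmodType F)
    (b : U1 -> U2 -> U3 -> V) : Prop :=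
  (forall y z, is_lin (fun x => b x y z)) /\ (forall x z, is_lin (fun y => b x y z))
  /\ (forall x y, is_lin (b x y)).

Definition tens_eq (F : fieldType) (H : lmodType F) (s t : seq (H * H)) : Prop :=
  forall (V : lmodType F) (b : H -> H -> V), is_bilin b ->
    \sum_(p <- s) b p.1 p.2 = \sum_(p <- t) b p.1 p.2.

Definition tens3_eq (F : fieldType) (H : lmodType F) (s t : seq (H * H * H)) : Prop :=
  forall (V : lmodType F) (b : H -> H -> H -> V), is_trilin b ->
    \sum_(p <- s) b p.1.1 p.1.2 p.2 = \sum_(p <- t) b p.1.1 p.1.2 p.2.

Definition is_hopf (F : fieldType) (H : algType F) (Delta : H -> seq (H * H))
    (eps : H -> F) (S : H -> H) : Prop :=
  [/\
      forall (k : F) (x y : H),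
        tens_eq (Delta (k *: x + y)) ([seq (k *: p.1, p.2) | p <- Delta x] ++ Delta y),
      (* coassociativity *)
      forall a : H,
        tens3_eq [seq (p.1, q.1, q.2) | p <- Delta a, q <- Delta p.2]
                 [seq (q.1, q.2, p.2) | p <- Delta a, q <- Delta p.1],
      (forall (k : F) (x y : H), eps (k *: x + y) = k * eps x + eps y) /\
      (forall a : H, \sum_(p <- Delta a) eps p.1 *: p.2 = a /\
                     \sum_(p <- Delta a) eps p.2 *: p.1 = a),
      [/\ forall a b : H,
            tens_eq (Delta (a * b)) [seq (p.1 * q.1, p.2 * q.2) | p <- Delta a, q <- Delta b],
          tens_eq (Delta 1) [:: (1, 1)],
          forall a b : H, eps (a * b) = eps a * eps b
        & eps 1 = 1]
    &
      is_lin S /\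
      (forall a : H, \sum_(p <- Delta a) S p.1 * p.2 = eps a *: 1 /\
                     \sum_(p <- Delta a) p.1 * S p.2 = eps a *: 1)].

Definition is_cocommutative (F : fieldType) (H : algType F) (Delta : H -> seq (H * H)) : Prop :=
  forall a : H, tens_eq (Delta a) [seq (p.2, p.1) | p <- Delta a].

Definition is_coalg_hom (F : fieldType) (H : algType F) (Delta : H -> seq (H * H))
    (eps : H -> F) (B : H -> H) : Prop :=
  [/\ is_lin B,
      forall a : H, tens_eq (Delta (B a)) [seq (B p.1, B p.2) | p <- Delta a]
    & forall a : H, eps (B a) = eps a].

Definition desc_op (F : fieldType) (H : algType F) (Delta : H -> seq (H * H))
    (S B1 B2 : H -> H) (a b : H) : H :=
  \sum_(p <- Delta a) B1 p.1 * b * S (B2 p.2).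

Definition cocycle (F : fieldType) (H : algType F) (Delta : H -> seq (H * H))
    (S B1 B2 : H -> H) (a : H) : H :=
  \sum_(p <- Delta a) B1 p.1 * S (B2 p.2).

Definition is_RB_system (F : fieldType) (H : algType F) (Delta : H -> seq (H * H))
    (eps : H -> F) (S B1 B2 : H -> H) : Prop :=
  [/\ is_hopf Delta eps S, is_cocommutative Delta,
      is_coalg_hom Delta eps B1 /\ is_coalg_hom Delta eps B2,
      B1 1 = 1 /\ B2 1 = 1
    & forall a b : H,
        B1 a * B1 b = B1 (desc_op Delta S B1 B2 a b) /\
        B2 a * B2 b = B2 (desc_op Delta S B1 B2 a b)].

Definition inH1 (F : fieldType) (H : algType F) (Delta : H -> seq (H * H))
    (S B1 B2 : H -> H) (x : H) : Prop :=
  exists a : H, x = cocycle Delta S B1 B2 a.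

Definition conv (F : fieldType) (H : algType F) (A : algType F)
    (Delta : H -> seq (H * H)) (f g : H -> A) (a : H) : A :=
  \sum_(p <- Delta a) f p.1 * g p.2.

Definition is_char (F : fieldType) (H : algType F) (A : algType F) (f : H -> A) : Prop :=
  [/\ is_lin f, f 1 = 1 & forall a b : H, f (a * b) = f a * f b].

(* phi : H_1 -> A (given as the values of a map H -> A on H_1) is in
   Char(H_{B1,B2}, A): algebra homomorphism (H_1, o, 1) -> A *)
Definition is_desc_char (F : fieldType) (H : algType F) (A : algType F)
    (Delta : H -> seq (H * H)) (S B1 B2 : H -> H) (phi : H -> A) : Prop :=
  [/\ forall (k : F) (x y : H), inH1 Delta S B1 B2 x -> inH1 Delta S B1 B2 y ->
        phi (k *: x + y) = k *: phi x + phi y,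
      phi 1 = 1
    & forall x y : H, inH1 Delta S B1 B2 x -> inH1 Delta S B1 B2 y ->
        phi (desc_op Delta S B1 B2 x y) = phi x * phi y].

(* Psi(f) = restriction of f to H_1 (represented by f itself, read on H_1) *)
Definition Psi (F : fieldType) (H : algType F) (A : algType F) (f : H -> A) : H -> A := f.

From HB Require Import structures.
From mathcomp Require Import all_boot all_order all_algebra.
Import GRing.Theory.
Local Open Scope ring_scope.
Set Implicit Arguments. Unset Strict Implicit. Unset Printing Implicit Defensive.

(** The cocycle σ = B1 ⋆ (S ∘ B2) is a convolution of maps preserving the
    coproduct (B1 and B2 are coalgebra maps, and so is the antipode because H
    is cocommutative). In a cocommutative bialgebra such convolutions again
    preserve the coproduct, so Δσ(a) = σ(a1) ⊗ σ(a2). The Rota-Baxter identity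
    at b = 1 gives B_i(σ a) = B_i(a); together, σ(a) ∘ y = a ∘ y. For an
    algebra map f into a commutative algebra, f(a ∘ y) = f(y) f(σ a), so f is
    multiplicative for ∘ on H_1 = Im σ. Convolution in H_{B1,B2} uses the
    restricted coproduct, so Ψ respects it trivially. *)

Section LinearMaps.
Variable F : fieldType.
Implicit Types U V W : lmodType F.

Lemma linD U V (f : U -> V) : is_lin f -> forall x y, f (x + y) = f x + f y.
Proof. by move=> hf x y; have := hf 1 x y; rewrite !scale1r. Qed.

Lemma lin0 U V (f : U -> V) : is_lin f -> f 0 = 0.
Proof. by move=> hf; apply: (addrI (f 0)); rewrite addr0 -(linD hf) addr0. Qed.

Lemma linZ U V (f : U -> V) : is_lin f -> forall k x, f (k *: x) = k *: f x.
Proof. by move=> hf k x; have := hf k x 0; rewrite !addr0 (lin0 hf) addr0. Qed.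

Lemma lin_sum U V (f : U -> V) : is_lin f -> forall I (r : seq I) (g : I -> U),
  f (\sum_(i <- r) g i) = \sum_(i <- r) f (g i).
Proof. by move=> hf I r g; apply: (big_morph f (linD hf) (lin0 hf)). Qed.

Lemma is_lin_sum U V I (r : seq I) (g : I -> U -> V) :
  (forall i, is_lin (g i)) -> is_lin (fun x => \sum_(i <- r) g i x).
Proof.
by move=> hg k x y; rewrite scaler_sumr -big_split; apply: eq_bigr => i _; apply: hg.
Qed.

Lemma is_lin_comp U V W (f : U -> V) (g : V -> W) :
  is_lin f -> is_lin g -> is_lin (fun x => g (f x)).
Proof. by move=> hf hg k x y; rewrite hf hg. Qed.

Lemma is_lin_id U : is_lin (fun x : U => x).
Proof. by []. Qed.

Lemma is_lin_mulr (R : algType F) (c : R) : is_lin (fun x : R => x * c).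
Proof. by move=> k x y; rewrite mulrDl scalerAl. Qed.

Lemma is_lin_mull (R : algType F) (c : R) : is_lin (fun x : R => c * x).
Proof. by move=> k x y; rewrite mulrDr scalerAr. Qed.

Lemma is_bilin_comp U1 U2 W1 W2 V (b : W1 -> W2 -> V) (g1 : U1 -> W1) (g2 : U2 -> W2) :
  is_bilin b -> is_lin g1 -> is_lin g2 -> is_bilin (fun x y => b (g1 x) (g2 y)).
Proof.
by move=> [hb1 hb2] h1 h2; split=> z; [apply: is_lin_comp h1 (hb1 _)|apply: is_lin_comp h2 (hb2 _)].
Qed.

Definition is_quadlin U V (Q : U -> U -> U -> U -> V) : Prop :=
  [/\ forall x y z, is_lin (fun w => Q w x y z), forall w y z, is_lin (fun x => Q w x y z),
      forall w x z, is_lin (fun y => Q w x y z) & forall w x y, is_lin (Q w x y)].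

Lemma is_quadlin_mul_pair (R : algType F) V (b : R -> R -> V) (l r : R -> R) :
  is_bilin b -> is_lin l -> is_lin r -> is_quadlin (fun w x y z => b (l w * r y) (l x * r z)).
Proof.
move=> [hb1 hb2] hl hr; split=> *.
- exact: is_lin_comp (is_lin_comp hl (is_lin_mulr _)) (hb1 _).
- exact: is_lin_comp (is_lin_comp hl (is_lin_mulr _)) (hb2 _).
- exact: is_lin_comp (is_lin_comp hr (is_lin_mull _)) (hb1 _).
- exact: is_lin_comp (is_lin_comp hr (is_lin_mull _)) (hb2 _).
Qed.

End LinearMaps.

Section Sweedler.
Variables (F : fieldType) (H : algType F) (Delta : H -> seq (H * H)).

Definition sweedler (V : lmodType F) (b : H -> H -> V) (w : H) : V :=
  \sum_(p <- Delta w) b p.1 p.2.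

Definition sweedler4 (V : lmodType F) (Q : H -> H -> H -> H -> V) (a : H) : V :=
  \sum_(p <- Delta a) \sum_(q <- Delta p.1) \sum_(s <- Delta p.2) Q q.1 q.2 s.1 s.2.

Definition comultiplicative (L : H -> H) : Prop :=
  forall (V : lmodType F) (b : H -> H -> V), is_bilin b ->
    forall u, sweedler b (L u) = sweedler (fun x y => b (L x) (L y)) u.

Lemma sweedler_lin_param (U V : lmodType F) (G : U -> H -> H -> V) w :
  (forall x y, is_lin (fun u => G u x y)) -> is_lin (fun u => sweedler (G u) w).
Proof. by move=> hG; apply: is_lin_sum => p; apply: hG. Qed.

Lemma coalg_hom_comultiplicative eps (B : H -> H) :
  is_coalg_hom Delta eps B -> comultiplicative B.
Proof. by case=> _ hD _ V b hb u; rewrite /sweedler (hD u V b hb) big_map. Qed.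

Lemma comultiplicative_comp (L R : H -> H) : is_lin R ->
  comultiplicative L -> comultiplicative R -> comultiplicative (fun x => R (L x)).
Proof.
move=> hR cL cR V b hb u.
by rewrite (cR _ _ hb) (cL _ _ (is_bilin_comp hb hR hR)).
Qed.

Variables (eps : H -> F) (S : H -> H).
Hypothesis hopf : is_hopf Delta eps S.

Lemma sweedler_lin (V : lmodType F) (b : H -> H -> V) : is_bilin b -> is_lin (sweedler b).
Proof.
move=> hb k x y; case: hopf => hD _ _ _ _.
rewrite /sweedler (hD k x y V b hb) big_cat big_map /= scaler_sumr.
by congr (_ + _); apply: eq_bigr => p _; apply: (linZ (hb.1 p.2)).
Qed.

Lemma sweedlerM (V : lmodType F) (b : H -> H -> V) : is_bilin b -> forall u v,
  sweedler b (u * v) = \sum_(q <- Delta u) \sum_(r <- Delta v) b (q.1 * r.1) (q.2 * r.2).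
Proof.
move=> hb u v; case: hopf => _ _ _ [hM _ _ _] _.
by rewrite /sweedler (hM u v V b hb) big_allpairs_dep.
Qed.

Lemma sweedler1 (V : lmodType F) (b : H -> H -> V) : is_bilin b -> sweedler b 1 = b 1 1.
Proof.
by move=> hb; case: hopf => _ _ _ [_ h1 _ _] _; rewrite /sweedler (h1 V b hb) big_seq1.
Qed.

Lemma sweedler_coassoc (V : lmodType F) (t : H -> H -> H -> V) : is_trilin t -> forall a,
  \sum_(p <- Delta a) \sum_(q <- Delta p.2) t p.1 q.1 q.2 =
  \sum_(p <- Delta a) \sum_(q <- Delta p.1) t q.1 q.2 p.2.
Proof.
by move=> ht a; case: hopf => _ hco _ _ _; have := hco a V t ht; rewrite !big_allpairs_dep.
Qed.

Lemma eps_lin : is_lin (eps : H -> F^o).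
Proof. by case: hopf => _ _ []. Qed.

Lemma counitl (V : lmodType F) (g : H -> V) : is_lin g -> forall a,
  \sum_(p <- Delta a) eps p.1 *: g p.2 = g a.
Proof.
move=> hg a; case: hopf => _ _ [_ /(_ a) [ha _]] _ _.
by rewrite -{2}ha (lin_sum hg); apply: eq_bigr => p _; rewrite (linZ hg).
Qed.

Lemma counitr (V : lmodType F) (g : H -> V) : is_lin g -> forall a,
  \sum_(p <- Delta a) eps p.2 *: g p.1 = g a.
Proof.
move=> hg a; case: hopf => _ _ [_ /(_ a) [_ ha]] _ _.
by rewrite -{2}ha (lin_sum hg); apply: eq_bigr => p _; rewrite (linZ hg).
Qed.

Lemma antipode_lin : is_lin S.
Proof. by case: hopf => _ _ _ _ []. Qed.

Lemma antipodeL a : \sum_(p <- Delta a) S p.1 * p.2 = eps a *: 1.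
Proof. by case: hopf => _ _ _ _ [_ /(_ a) []]. Qed.

Lemma antipodeR a : \sum_(p <- Delta a) p.1 * S p.2 = eps a *: 1.
Proof. by case: hopf => _ _ _ _ [_ /(_ a) []]. Qed.

Lemma sweedler4_coassoc (V : lmodType F) (Q : H -> H -> H -> H -> V) : is_quadlin Q ->
  forall a, sweedler4 Q a =
  \sum_(p <- Delta a) \sum_(r <- Delta p.1) \sum_(q <- Delta r.2) Q r.1 q.1 q.2 p.2.
Proof.
case=> h1 h2 h3 h4 a.
pose t x y z := sweedler (fun u v => Q u v y z) x.
have ht : is_trilin t.
  split; [|split] => *; last by apply: sweedler_lin_param => *; apply: h4.
  - by apply: sweedler_lin; split=> *; [apply: h1|apply: h2].
  - by apply: sweedler_lin_param => *; apply: h3.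
transitivity (\sum_(p <- Delta a) \sum_(s <- Delta p.2) t p.1 s.1 s.2).
  by apply: eq_bigr => p _; rewrite exchange_big.
rewrite (sweedler_coassoc ht); apply: eq_bigr => p _.
have ht2 : is_trilin (fun x y z => Q x y z p.2).
  by split; [|split] => *; [apply: h1|apply: h2|apply: h3].
by rewrite -(sweedler_coassoc ht2).
Qed.

Hypothesis cocom : is_cocommutative Delta.

Lemma sweedlerC (V : lmodType F) (b : H -> H -> V) : is_bilin b ->
  forall a, sweedler b a = sweedler (fun u v => b v u) a.
Proof. by move=> hb a; have := cocom a hb; rewrite /sweedler big_map. Qed.

Lemma sweedler4_swap23 (V : lmodType F) (Q : H -> H -> H -> H -> V) : is_quadlin Q ->
  forall a, sweedler4 Q a = sweedler4 (fun w x y z => Q w y x z) a.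
Proof.
move=> hQ a; have hQ' : is_quadlin (fun w x y z => Q w y x z).
  by case: hQ => h1 h2 h3 h4; split=> *; [apply: h1|apply: h3|apply: h2|apply: h4].
rewrite (sweedler4_coassoc hQ) (sweedler4_coassoc hQ').
apply: eq_bigr => p _; apply: eq_bigr => r _.
case: hQ => _ h2 h3 _.
by apply: (sweedlerC (b := fun u v => Q r.1 u v p.2)); split=> *; [apply: h2|apply: h3].
Qed.

Lemma sweedler4_antipode (V : lmodType F) (d : H -> H -> V) : is_bilin d -> forall a,
  sweedler4 (fun x1 x2 y1 y2 => d (x1 * S y1) (x2 * S y2)) a = eps a *: d 1 1.
Proof.
move=> hd a.
rewrite (sweedler4_swap23 (is_quadlin_mul_pair hd (@is_lin_id _ H) antipode_lin)).
have -> : eps a = \sum_(p <- Delta a) eps p.1 * eps p.2 := esym (counitl eps_lin a).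
rewrite /sweedler4 scaler_suml; apply: eq_bigr => p _.
rewrite -scalerA -(linZ (hd.2 _)) -(linZ (hd.1 _)) -!antipodeR.
rewrite (lin_sum (hd.1 _)); apply: eq_bigr => q _.
by rewrite (lin_sum (hd.2 _)).
Qed.

Lemma antipode_comultiplicative : comultiplicative S.
Proof.
(* Uniqueness of convolution inverses: both sides equal Δ(S w1) Δ(w2) (S ⊗ S)Δ(w3),
   encoded by t, where the antipode collapses either the last two factors or the
   first two. *)
move=> V c hc w; have hS := antipode_lin.
have hcS a b : is_bilin (fun u v => c (u * S a) (v * S b)).
  exact: is_bilin_comp hc (is_lin_mulr _) (is_lin_mulr _).
pose t g x y := sweedler (fun a b => sweedler (fun u v => c (u * S a) (v * S b)) (S g * x)) y.
have ht : is_trilin t.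
  split; [|split] => *.
  - apply: sweedler_lin_param => *.
    exact: is_lin_comp (is_lin_comp hS (is_lin_mulr _)) (sweedler_lin (hcS _ _)).
  - apply: sweedler_lin_param => *.
    exact: is_lin_comp (is_lin_mull _) (sweedler_lin (hcS _ _)).
  - apply: sweedler_lin; split=> *; apply: sweedler_lin_param => *.
    + exact: is_lin_comp (is_lin_comp hS (is_lin_mull _)) (hc.1 _).
    + exact: is_lin_comp (is_lin_comp hS (is_lin_mull _)) (hc.2 _).
have collapse_right g y : \sum_(q <- Delta y) t g q.1 q.2 = eps y *: sweedler c (S g).
  pose d u v := sweedler (fun r1 r2 => c (r1 * u) (r2 * v)) (S g).
  have hd : is_bilin d.
    by split=> *; apply: sweedler_lin_param => *;
      [apply: is_lin_comp (is_lin_mull _) (hc.1 _)|apply: is_lin_comp (is_lin_mull _) (hc.2 _)].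
  transitivity (sweedler4 (fun x1 x2 y1 y2 => d (x1 * S y1) (x2 * S y2)) y).
    apply: eq_bigr => q _; rewrite exchange_big; apply: eq_bigr => s _.
    rewrite (sweedlerM (hcS _ _)) /d /sweedler exchange_big.
    by apply: eq_bigr => k _; apply: eq_bigr => r _; rewrite !mulrA.
  rewrite (sweedler4_antipode hd); congr (_ *: _).
  by apply: eq_bigr => r _; rewrite !mulr1.
have collapse_left x y :
    \sum_(q <- Delta x) t q.1 q.2 y = eps x *: sweedler (fun u v => c (S u) (S v)) y.
  rewrite /t /sweedler exchange_big scaler_sumr; apply: eq_bigr => s _.
  rewrite -(lin_sum (sweedler_lin (hcS s.1 s.2)) _ (fun q => S q.1 * q.2)) antipodeL.
  by rewrite (linZ (sweedler_lin (hcS _ _))) (sweedler1 (hcS _ _)) !mul1r.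
rewrite -(counitr (is_lin_comp hS (sweedler_lin hc))).
under eq_bigr => p _ do rewrite -collapse_right.
rewrite (sweedler_coassoc ht).
under eq_bigr => p _ do rewrite collapse_left.
exact: counitl (sweedler_lin (is_bilin_comp hc hS hS)) w.
Qed.

Lemma comultiplicative_conv (L R : H -> H) : is_lin L -> is_lin R ->
  comultiplicative L -> comultiplicative R ->
  comultiplicative (fun a => \sum_(p <- Delta a) L p.1 * R p.2).
Proof.
move=> hL hR cL cR V b hb a; rewrite (lin_sum (sweedler_lin hb)).
transitivity (sweedler4 (fun w x y z => b (L w * R y) (L x * R z)) a).
  apply: eq_bigr => p _; rewrite (sweedlerM hb).
  pose bR x y := sweedler (fun r1 r2 => b (x * r1) (y * r2)) (R p.2).
  have hbR : is_bilin bR.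
    by split=> *; apply: sweedler_lin_param => *;
      [apply: is_lin_comp (is_lin_mulr _) (hb.1 _)|apply: is_lin_comp (is_lin_mulr _) (hb.2 _)].
  rewrite [LHS](cL _ bR hbR); apply: eq_bigr => q _.
  exact: cR _ _ (is_bilin_comp hb (is_lin_mull _) (is_lin_mull _)) p.2.
rewrite (sweedler4_swap23 (is_quadlin_mul_pair hb hL hR)); apply: eq_bigr => p _.
rewrite (lin_sum (hb.1 _)); apply: eq_bigr => q _.
by rewrite (lin_sum (hb.2 _)).
Qed.

End Sweedler.

Section RotaBaxter.
Variables (F : fieldType) (H : algType F) (Delta : H -> seq (H * H)) (eps : H -> F)
  (S B1 B2 : H -> H).
Hypothesis RB : is_RB_system Delta eps S B1 B2.

Local Notation sigma := (cocycle Delta S B1 B2).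
Local Notation "a \o* b" := (desc_op Delta S B1 B2 a b) (at level 40).

Lemma cocycle_comultiplicative : comultiplicative Delta sigma.
Proof.
case: RB => hopf cocom [hB1 hB2] _ _.
have [[l1 _ _] [l2 _ _]] := (hB1, hB2).
have lS := antipode_lin hopf.
apply: (comultiplicative_conv hopf cocom (L := B1) (R := fun x => S (B2 x))) => //.
- exact: is_lin_comp l2 lS.
- exact: coalg_hom_comultiplicative hB1.
- apply: comultiplicative_comp lS (coalg_hom_comultiplicative hB2) _.
  exact: antipode_comultiplicative hopf cocom.
Qed.

Lemma desc_op1 a : a \o* 1 = sigma a.
Proof. by apply: eq_bigr => p _; rewrite mulr1. Qed.

Lemma RB_cocycle a : B1 (sigma a) = B1 a /\ B2 (sigma a) = B2 a.
Proof.
case: RB => _ _ _ [B11 B21] /(_ a 1) [h1 h2].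
by rewrite -desc_op1 -h1 -h2 B11 B21 !mulr1.
Qed.

Lemma desc_op_cocycle a y : sigma a \o* y = a \o* y.
Proof.
case: RB => hopf _ [[l1 _ _] [l2 _ _]] _ _.
have hb : is_bilin (fun u v => B1 u * y * S (B2 v)).
  apply: (is_bilin_comp (b := fun x z => x * y * z)) l1 (is_lin_comp l2 (antipode_lin hopf)).
  by split=> *; [apply: is_lin_comp (is_lin_mulr _) (is_lin_mulr _)|apply: is_lin_mull].
transitivity (sweedler Delta (fun u v => B1 (sigma u) * y * S (B2 (sigma v))) a).
  exact: cocycle_comultiplicative hb a.
by apply: eq_bigr => p _; rewrite (RB_cocycle p.1).1 (RB_cocycle p.2).2.
Qed.

End RotaBaxter.

Lemma char_desc_op (F : fieldType) (H : algType F) (A : comAlgType F) (f : H -> A) :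
  is_char f -> forall (Delta : H -> seq (H * H)) (S B1 B2 : H -> H) a y,
  f (desc_op Delta S B1 B2 a y) = f y * f (cocycle Delta S B1 B2 a).
Proof.
case=> hf _ fM Delta S B1 B2 a y; rewrite !(lin_sum hf) mulr_sumr.
by apply: eq_bigr => p _; rewrite !fM mulrAC mulrC.
Qed.

Theorem mainTheorem14 (F : fieldType) (char0 : [pchar F] =i pred0)
    (H : algType F) (Delta : H -> seq (H * H)) (eps : H -> F) (S B1 B2 : H -> H)
    (RB : is_RB_system Delta eps S B1 B2)
    (A : comAlgType F) :
  (* Psi is well defined: it maps Char(H,A) into Char(H_{B1,B2},A) *)
  (forall f : H -> A, is_char f -> is_desc_char Delta S B1 B2 (Psi f)) /\
  (* Psi is a group homomorphism for the convolution products *)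
  (forall f g : H -> A, is_char f -> is_char g ->
     forall x : H, inH1 Delta S B1 B2 x ->
       Psi (conv Delta f g) x = conv Delta (Psi f) (Psi g) x).
Proof.
split=> [f fchar|//].
have [hf f1 _] := fchar.
split=> [k x y _ _|//|_ y [a ->] _]; first exact: hf.
by rewrite /Psi (desc_op_cocycle RB) (char_desc_op fchar) mulrC.
Qed.
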